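(* Let $1\le b<\frac{n}{2}-1$, and let $T$ be a tree attaining the maximum value of $M_1$ over $\mathcal{CT}^*_{n,b}$, or a tree attaining the maximum value of $M_2$ over $\mathcal{CT}^*_{n,b}$. Then: (a) if $n_2>0$ then $n_1=2b+2$, $n_2=n-3b-2$, $n_3=0$ and $n_4=b$; (b) $n_2=0$ if and only if $n_1=n-b$, $n_3=3b-n+2$ and $n_4=n-2b-2$.
   Context: A chemical tree is a tree with maximum degree at most $4$. A branching vertex is a vertex of degree greater than $2$. $\mathcal{CT}^*_{n,b}$ is the class of all $n$-vertex chemical trees with exactly $b$ branching vertices. $n_i$ denotes the number of vertices of degree $i$ in $T$. $M_1(G)=\sum_v d_v^2$ and $M_2(G)=\sum_{uv\in E(G)}d_ud_v$, where $d_v$ is the degree of $v$. *)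

From mathcomp Require Import all_boot all_order all_algebra.
Set Implicit Arguments. Unset Strict Implicit. Unset Printing Implicit Defensive.

Definition simple_graph (n : nat) (e : rel 'I_n) : Prop :=
  (forall u v, e u v = e v u) /\ (forall v, ~~ e v v).

Definition deg (n : nat) (e : rel 'I_n) (v : 'I_n) : nat := #|[set u | e v u]|.

Definition nedges (n : nat) (e : rel 'I_n) : nat :=
  #|[set p : 'I_n * 'I_n | e p.1 p.2 && (val p.1 < val p.2)%N]|.

Definition is_tree (n : nat) (e : rel 'I_n) : Prop :=
  simple_graph e /\ (forall u v, connect e u v) /\ nedges e = n.-1.

Definition chemical_tree (n : nat) (e : rel 'I_n) : Prop :=
  is_tree e /\ (forall v, (deg e v <= 4)%N).

Definition ndeg (n : nat) (e : rel 'I_n) (i : nat) : nat :=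
  #|[set v | deg e v == i]|.

Definition nbranch (n : nat) (e : rel 'I_n) : nat :=
  #|[set v | (2 < deg e v)%N]|.

Definition in_CTstar (n b : nat) (e : rel 'I_n) : Prop :=
  chemical_tree e /\ nbranch e = b.

Definition M1 (n : nat) (e : rel 'I_n) : nat := (\sum_(v : 'I_n) deg e v ^ 2)%N.

Definition M2 (n : nat) (e : rel 'I_n) : nat :=
  (\sum_(p : 'I_n * 'I_n | e p.1 p.2 && (val p.1 < val p.2)%N)
      deg e p.1 * deg e p.2)%N.

From mathcomp Require Import all_boot all_order all_algebra.
From mathcomp Require Import zify ring.
Set Implicit Arguments. Unset Strict Implicit. Unset Printing Implicit Defensive.

(* Suppose an extremal tree T has a vertex w of degree 2 and a vertex v of
   degree 3.  Of the two edges at w, one, say wy, is off the w-v path; moving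
   its end from w to v (T - wy + vy) gives again a chemical tree with the same
   branching vertices, now with deg w = 1 and deg v = 4.  Then M1 grows by 4,
   and M2 changes by N_T(v) + 2 deg y - N_T'(w) >= 3 + 2 - 4, where N_G(x) is
   the sum of the degrees of the neighbours of x.  So n2 = 0 or n3 = 0, and
   the claim follows by solving the linear relations n = n1 + n2 + n3 + n4,
   n1 + 2 n2 + 3 n3 + 4 n4 = 2 (n - 1) and b = n3 + n4. *)

Lemma card_set_sum (T : finType) (P : pred T) : #|[set z | P z]| = \sum_z P z.
Proof. by rewrite -sum1dep_card big_mkcond; apply: eq_bigr => z _; case: (P z). Qed.

Lemma sum_pred1_mul (T : finType) (a : T) (F : T -> nat) :
  \sum_z (z == a) * F z = F a.
Proof.
by rewrite (bigD1 a) //= eqxx mul1n big1 ?addn0 // => z /negbTE ->; rewrite mul0n.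
Qed.

Lemma sum_pred1 (T : finType) (a : T) : \sum_z (z == a : nat) = 1.
Proof. by rewrite -(sum_pred1_mul a (fun=> 1)); apply: eq_bigr => z _; rewrite muln1. Qed.

Lemma sum_andb_pred1 (T : finType) (c : bool) (y : T) :
  \sum_z (c && (z == y) : nat) = c.
Proof. by case: c; [exact: sum_pred1 | rewrite big1]. Qed.

Lemma eq_sum_shift1 (T : finType) (f g : T -> nat) a c :
  (forall z, f z + (z == a) = g z + (z == c)) -> \sum_z f z = \sum_z g z.
Proof.
move=> fg; have : \sum_z (f z + (z == a)) = \sum_z (g z + (z == c)).
  by apply: eq_bigr => z _; exact: fg.
by rewrite !big_split /= !sum_pred1 => /addIn.
Qed.

Section Weights.

Variables (n : nat) (e : rel 'I_n).

Definition pair_weight (h : 'I_n -> nat) : nat :=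
  \sum_(p : 'I_n * 'I_n | e p.1 p.2) h p.1 * h p.2.

Definition nbr_weight (h : 'I_n -> nat) (a : 'I_n) : nat := \sum_(u | e a u) h u.

Lemma pair_weightE (h : 'I_n -> nat) :
  pair_weight h = \sum_(p : 'I_n * 'I_n) e p.1 p.2 * (h p.1 * h p.2).
Proof.
rewrite /pair_weight big_mkcond; apply: eq_bigr => p _.
by case: (e p.1 p.2); rewrite ?mul1n.
Qed.

Lemma degE v : deg e v = \sum_u e v u.
Proof. exact: card_set_sum. Qed.

Lemma deg_gt0 a b : e a b -> 0 < deg e a.
Proof. by move=> eab; apply/card_gt0P; exists b; rewrite inE. Qed.

Lemma nbr_weight_le (h : 'I_n -> nat) k a :
  (forall z, h z <= k) -> nbr_weight h a <= deg e a * k.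
Proof. by move=> hk; rewrite /deg -sum_nat_cond_const; apply: leq_sum => u _. Qed.

Hypothesis sg : simple_graph e.

Lemma deg_le_nbr_weight a : deg e a <= nbr_weight (deg e) a.
Proof.
have [sy _] := sg; rewrite /deg -sum1dep_card; apply: leq_sum => u eau.
by apply: (@deg_gt0 u a); rewrite sy.
Qed.

Lemma sum_adj_swap (F : 'I_n -> 'I_n -> nat) :
  \sum_(p : 'I_n * 'I_n | e p.1 p.2) F p.1 p.2 =
  \sum_(p : 'I_n * 'I_n | e p.1 p.2) F p.2 p.1.
Proof.
have [sy _] := sg; rewrite (reindex_inj (can_inj swap_pairK)) /=.
by apply: eq_bigl => p; rewrite sy.
Qed.

Lemma sum_adj_sym (g : 'I_n -> 'I_n -> nat) : (forall a b, g a b = g b a) ->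
  \sum_(p : 'I_n * 'I_n | e p.1 p.2) g p.1 p.2 =
  2 * \sum_(p : 'I_n * 'I_n | e p.1 p.2 && (val p.1 < val p.2)) g p.1 p.2.
Proof.
have [sy irr] := sg; move=> gC.
rewrite (bigID (fun p : 'I_n * 'I_n => val p.1 < val p.2)) /= mul2n -addnn.
congr (_ + _); rewrite (reindex_inj (can_inj swap_pairK)) /=.
apply: eq_big => [[a b]|[a b] _] /=; last exact: gC.
rewrite sy -leqNgt leq_eqVlt.
have [->|ab] := eqVneq a b; first by rewrite (negbTE (irr b)).
by rewrite (inj_eq val_inj) (negbTE ab).
Qed.

Lemma handshake : \sum_v deg e v = 2 * nedges e.
Proof.
rewrite /nedges -sum1dep_card -(sum_adj_sym (g := fun _ _ => 1)) //.
rewrite (eq_bigr _ (fun v _ => degE v)) pair_big /= [RHS]big_mkcond.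
by apply: eq_bigr => p _; case: (e p.1 p.2).
Qed.

Lemma M2_pair_weight : 2 * M2 e = pair_weight (deg e).
Proof.
rewrite /M2 /pair_weight (sum_adj_sym (g := fun a b => deg e a * deg e b)) //.
by move=> a b; rewrite mulnC.
Qed.

Lemma pair_weight_bump (h g : 'I_n -> nat) a : (forall z, g z = h z + (z == a)) ->
  pair_weight g = pair_weight h + 2 * nbr_weight h a.
Proof.
have [_ irr] := sg; move=> gE.
have expand p : e p.1 p.2 ->
    g p.1 * g p.2 = h p.1 * h p.2 + ((p.1 == a) * h p.2 + (p.2 == a) * h p.1).
  case: p => x z /= exz; rewrite !gE.
  have xz0 : (x == a) * (z == a) = 0.
    by case: eqP exz => // ->; case: eqP => // ->; rewrite (negbTE (irr a)).
  rewrite mulnDl !mulnDr xz0 addn0 [h x * _]mulnC; ring.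
have nbr : \sum_(p : 'I_n * 'I_n | e p.1 p.2) (p.1 == a) * h p.2 = nbr_weight h a.
  rewrite -(pair_big_dep xpredT e (fun i j => (i == a) * h j)) /=.
  under eq_bigr do rewrite -big_distrr; exact: sum_pred1_mul.
have nbr' : \sum_(p : 'I_n * 'I_n | e p.1 p.2) (p.2 == a) * h p.1 = nbr_weight h a.
  by rewrite -nbr (sum_adj_swap (fun x z => (z == a) * h x)).
by rewrite /pair_weight (eq_bigr _ expand) !big_split /= nbr nbr' mul2n -addnn.
Qed.

End Weights.

Section Connected.

Variables (n : nat) (e : rel 'I_n).

Fixpoint ball (r : 'I_n) (k : nat) : {set 'I_n} :=
  if k is k'.+1 then ball r k' :|: [set z | [exists u in ball r k', e u z]]
  else [set r].

Lemma ball_path r x k (p : seq 'I_n) :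
  x \in ball r k -> path e x p -> last x p \in ball r (k + size p).
Proof.
elim: p x k => [|y p IHp] x k xk /=; first by rewrite addn0.
case/andP=> exy py; rewrite addnS -addSn; apply: IHp py.
by rewrite inE; apply/orP; right; rewrite inE; apply/existsP; exists x; rewrite xk.
Qed.

Lemma exists_descent_rank r : (forall z, connect e r z) ->
  exists h : 'I_n -> nat, forall z, z != r -> exists2 u, e u z & h u < h z.
Proof.
move=> conn.
have in_ball z : exists k, z \in ball r k.
  have /connectP [p pp ->] := conn z; exists (0 + size p).
  by apply: ball_path pp; rewrite inE.
exists (fun z => ex_minn (in_ball z)) => z zr.
case: ex_minnP => [[|k]] /=; first by rewrite inE (negbTE zr).
rewrite inE => /orP [zk /(_ k zk)|]; first by rewrite ltnn.
rewrite inE => /existsP [u /andP [uk euz]] _; exists u => //.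
by case: ex_minnP => m _ /(_ k uk).
Qed.

Hypothesis e_sym : forall a b, e a b = e b a.

(* Send each z != r to its edge towards a parent of lower rank: the endpoint
   of larger rank recovers z, so this is injective. *)
Lemma nedges_ge_descent r (h : 'I_n -> nat) :
  (forall z, z != r -> exists2 u, e u z & h u < h z) -> n.-1 <= nedges e.
Proof.
move=> desc; pose par z := odflt z [pick u | e u z && (h u < h z)].
have parP z : z != r -> e (par z) z && (h (par z) < h z).
  move=> zr; rewrite /par; case: pickP => [u //|none].
  by have [u euz hu] := desc z zr; move: (none u); rewrite euz hu.
pose edge z := if val z < val (par z) then (z, par z) else (par z, z).
pose top (p : 'I_n * 'I_n) := if h p.2 < h p.1 then p.1 else p.2.
have edgeK : {in [set~ r], cancel edge top}.
  move=> z; rewrite !inE => /parP /andP [_ hz]; rewrite /edge.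
  by case: ifP => _; rewrite /top /= ?hz // ltnNge (ltnW hz).
have sub : edge @: [set~ r] \subset [set p | e p.1 p.2 && (val p.1 < val p.2)].
  apply/subsetP => p /imsetP [z]; rewrite !inE => /parP /andP [ez hz] ->.
  have zpar : val z != val (par z).
    by apply: contraTneq hz => /val_inj <-; rewrite ltnn.
  by rewrite /edge; case: ltngtP zpar => //= lt _; rewrite ?lt ?andbT // e_sym.
have := subset_leq_card sub.
by rewrite (card_in_imset (can_in_inj edgeK)) cardsC1 card_ord.
Qed.

Lemma nedges_ge_connected r : (forall z, connect e r z) -> n.-1 <= nedges e.
Proof. by case/exists_descent_rank => h; apply: nedges_ge_descent. Qed.

End Connected.

Section EdgeSurgery.

Variables (n : nat) (e : rel 'I_n).

Definition del_edge x y : rel 'I_n :=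
  fun a b => e a b && ~~ (((a == x) && (b == y)) || ((a == y) && (b == x))).

Definition add_edge x y : rel 'I_n :=
  fun a b => [|| e a b, (a == x) && (b == y) | (a == y) && (b == x)].

Lemma connect_del_edge_sub (f : rel 'I_n) x y :
  connect_sym f -> subrel (del_edge x y) f -> connect f x y ->
  subrel (connect e) (connect f).
Proof.
move=> fsym sub fxy; apply: connect_sub => a b eab.
case dab: (del_edge x y a b); first by apply/connect1/sub.
move: dab; rewrite /del_edge eab /= => /negbFE /orP.
by case=> /andP [/eqP-> /eqP->]; rewrite // fsym.
Qed.

Lemma exists_edge_off_path w v : w != v -> 1 < deg e w ->
  connect e w v -> exists2 y, e w y & connect (del_edge w y) w v.
Proof.
move=> wv dw /connectP [p pp lastp].
case: (shortenP pp) lastp => -[/= _ _ _ vw|u q]; first by rewrite vw eqxx in wv.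
move=> /= /andP [ewu pq] /andP [w_uq _] _ lastq.
have [y] : exists y, y \in [set z | e w z] :\ u.
  apply/set0Pn; rewrite -card_gt0; move: dw; rewrite /deg (cardsD1 u).
  by case: (u \in _) => /=; lia.
rewrite !inE => /andP [yu ewy]; exists y => //.
apply/connectP; exists (u :: q) => //=; apply/andP; split.
  have uw : u != w by apply/eqP => uw; rewrite uw mem_head in w_uq.
  by rewrite /del_edge ewu eqxx eq_sym (negbTE yu) (negbTE uw) !andbF.
apply: (sub_in_path (P := predC1 w) _ _ pq).
  move=> a b; rewrite !inE => aw bw eab.
  by rewrite /del_edge eab (negbTE aw) (negbTE bw) !andbF.
by apply/allP => x xuq /=; apply/eqP => xw; rewrite -xw xuq in w_uq.
Qed.

Hypothesis sg : simple_graph e.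

Lemma simple_del_edge x y : simple_graph (del_edge x y).
Proof.
have [sy irr] := sg; split=> [a b|a]; last by rewrite /del_edge (negbTE (irr a)).
by rewrite /del_edge sy orbC [(b == y) && _]andbC [(b == x) && _]andbC.
Qed.

Lemma simple_add_edge x y : x != y -> simple_graph (add_edge x y).
Proof.
have [sy irr] := sg; move=> xy; split=> [a b|a].
  by rewrite /add_edge sy [(b == y) && _]andbC [(b == x) && _]andbC [X in _ || X]orbC.
rewrite /add_edge (negbTE (irr a)) /=.
by apply/norP; split; apply/andP => -[/eqP-> /eqP ab]; rewrite ab eqxx in xy.
Qed.

Lemma del_edgeE x y a b : e x y ->
  del_edge x y a b + ((a == x) && (b == y)) + ((a == y) && (b == x)) = e a b.
Proof.
have [sy irr] := sg; move=> exy.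
have xy : x != y by apply: contraTneq exy => ->; rewrite (negbTE (irr y)).
case: (boolP ((a == x) && (b == y))) => [/andP [/eqP-> /eqP->]|nxy].
  by rewrite /del_edge !eqxx (negbTE xy) exy.
case: (boolP ((a == y) && (b == x))) => [/andP [/eqP-> /eqP->]|nyx].
  by rewrite /del_edge !eqxx eq_sym (negbTE xy) sy exy.
by rewrite /del_edge (negbTE nxy) (negbTE nyx) /= andbT !addn0.
Qed.

Lemma add_edgeE x y a b : x != y -> ~~ e x y ->
  add_edge x y a b = e a b + ((a == x) && (b == y)) + ((a == y) && (b == x)) :> nat.
Proof.
have [sy _] := sg; move=> xy nexy.
case: (boolP ((a == x) && (b == y))) => [/andP [/eqP-> /eqP->]|nxy].
  by rewrite /add_edge !eqxx (negbTE xy) (negbTE nexy) orbT.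
case: (boolP ((a == y) && (b == x))) => [/andP [/eqP-> /eqP->]|nyx].
  by rewrite /add_edge !eqxx sy (negbTE nexy) !orbT addn0.
by rewrite /add_edge (negbTE nxy) (negbTE nyx) !orbF !addn0.
Qed.

Lemma deg_del_edge x y z : e x y ->
  deg (del_edge x y) z + (z == x) + (z == y) = deg e z.
Proof.
move=> exy; rewrite !degE -(sum_andb_pred1 (z == x) y) -(sum_andb_pred1 (z == y) x).
by rewrite -!big_split; apply: eq_bigr => b _; exact: del_edgeE.
Qed.

Lemma deg_add_edge x y z : x != y -> ~~ e x y ->
  deg (add_edge x y) z = deg e z + (z == x) + (z == y).
Proof.
move=> xy nexy; rewrite !degE -(sum_andb_pred1 (z == x) y) -(sum_andb_pred1 (z == y) x).
by rewrite -!big_split; apply: eq_bigr => b _; exact: add_edgeE.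
Qed.

Lemma nedges_del_edge x y : e x y -> (nedges (del_edge x y)).+1 = nedges e.
Proof.
move=> exy; have := handshake sg.
rewrite -(eq_bigr _ (fun z _ => deg_del_edge z exy)) !big_split /= !sum_pred1.
rewrite (handshake (simple_del_edge x y)); lia.
Qed.

End EdgeSurgery.

(* Otherwise the tree minus an edge would be connected with only n - 2 edges. *)
Lemma tree_del_edge_disconnected n (e : rel 'I_n) x y : is_tree e -> e x y ->
  ~~ connect (del_edge e x y) x y.
Proof.
move=> [sg [conn ne]] exy; apply/negP => cxy.
have [dsym _] := simple_del_edge sg x y.
have conn' z : connect (del_edge e x y) x z.
  exact: connect_del_edge_sub (sym_connect_sym dsym) (fun a b => id) cxy _ _ (conn x z).
have := nedges_ge_connected dsym conn'; have := nedges_del_edge sg exy; lia.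
Qed.

Definition move_edge n (e : rel 'I_n) w y v : rel 'I_n := add_edge (del_edge e w y) v y.

Section MoveEdge.

Variables (n : nat) (e : rel 'I_n) (w y v : 'I_n).
Hypotheses (tree_e : is_tree e) (ewy : e w y) (wv : w != v).
Hypothesis conn_wv : connect (del_edge e w y) w v.

Let sg : simple_graph e := tree_e.1.
Local Notation e' := (move_edge e w y v).

Lemma move_edge_fresh : v != y /\ ~~ del_edge e w y v y.
Proof.
have disc := tree_del_edge_disconnected tree_e ewy.
split; first by apply/eqP => vy; move: disc; rewrite -[X in connect _ _ X]vy conn_wv.
by apply: contraNN disc => dvy; apply: connect_trans conn_wv (connect1 dvy).
Qed.

Lemma move_edgeE a b :
  e' a b + ((a == w) && (b == y)) + ((a == y) && (b == w)) =
  e a b + ((a == v) && (b == y)) + ((a == y) && (b == v)).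
Proof.
have [vy fresh] := move_edge_fresh.
rewrite /move_edge (add_edgeE (simple_del_edge sg w y)) // -(del_edgeE sg a b ewy).
lia.
Qed.

Lemma deg_move_edge z : deg e' z + (z == w) = deg e z + (z == v).
Proof.
have [vy fresh] := move_edge_fresh.
rewrite /move_edge (deg_add_edge (simple_del_edge sg w y)) // -(deg_del_edge sg z ewy).
lia.
Qed.

Lemma tree_move_edge : is_tree e'.
Proof.
have [vy fresh] := move_edge_fresh.
have sg' : simple_graph e' := simple_add_edge (simple_del_edge sg w y) vy.
have [[sy' _] [conn ne]] := (sg', tree_e.2).
split=> //; split.
  have sub : subrel (del_edge e w y) e'.
    by move=> a b dab; rewrite /move_edge /add_edge dab.
  have cwy : connect e' w y.
    have cwv : connect e' w v by apply: connect_sub conn_wv => a b /sub/connect1.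
    by apply: connect_trans cwv (connect1 _); rewrite /move_edge /add_edge !eqxx orbT.
  move=> a b; exact: connect_del_edge_sub (sym_connect_sym sy') sub cwy _ _ (conn a b).
apply/eqP; rewrite -ne -(eqn_pmul2l (isT : 0 < 2)) -!handshake //.
by apply/eqP/(eq_sum_shift1 (a := w) (c := v)); exact: deg_move_edge.
Qed.

Lemma M1_move_edge : M1 e' + 2 * deg e w = M1 e + 2 * deg e v + 2.
Proof.
have pt z : deg e' z ^ 2 + (z == w) * (2 * deg e z) =
    deg e z ^ 2 + (z == w) + (z == v) * (2 * deg e z + 1).
  have := deg_move_edge z.
  case: (eqVneq z w) => [->|zw]; first by rewrite (negbTE wv) /=; nia.
  by case: (eqVneq z v) => [->|zv] /=; nia.
have : \sum_z (deg e' z ^ 2 + (z == w) * (2 * deg e z)) =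
    \sum_z (deg e z ^ 2 + (z == w) + (z == v) * (2 * deg e z + 1)).
  by apply: eq_bigr => z _; exact: pt.
rewrite !big_split /= !sum_pred1_mul sum_pred1 /M1 => ->.
rewrite -!addnA; congr (_ + _); lia.
Qed.

Lemma pair_weight_move_edge (h : 'I_n -> nat) :
  pair_weight e' h + 2 * (h w * h y) = pair_weight e h + 2 * (h v * h y).
Proof.
pose H (p : 'I_n * 'I_n) := h p.1 * h p.2.
have : \sum_p (e' p.1 p.2 * H p + (p == (w, y)) * H p + (p == (y, w)) * H p) =
       \sum_p (e p.1 p.2 * H p + (p == (v, y)) * H p + (p == (y, v)) * H p).
  by apply: eq_bigr => -[a b] _; rewrite -!mulnDl !xpair_eqE move_edgeE.
rewrite !big_split /= !sum_pred1_mul -!pair_weightE /H /=.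
rewrite [h y * h w]mulnC [h y * h v]mulnC; lia.
Qed.

Lemma M2_move_edge :
  M2 e' + nbr_weight e' (deg e') w + deg e w * deg e y =
  M2 e + nbr_weight e (deg e) v + (deg e v).+1 * deg e y.
Proof.
have [vy _] := move_edge_fresh.
(* [D] is [deg e] raised by one at v, and also [deg e'] raised by one at w. *)
pose D z := deg e z + (z == v).
have De : pair_weight e D = pair_weight e (deg e) + 2 * nbr_weight e (deg e) v.
  exact: pair_weight_bump.
have De' : pair_weight e' D = pair_weight e' (deg e') + 2 * nbr_weight e' (deg e') w.
  by apply: (pair_weight_bump (tree_move_edge).1) => z; rewrite /D -deg_move_edge.
have := pair_weight_move_edge D.
rewrite De De' -(M2_pair_weight sg) -(M2_pair_weight (tree_move_edge).1).
rewrite /D eqxx (negbTE wv) eq_sym (negbTE vy); nia.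
Qed.

End MoveEdge.

Lemma move_edge_improves n (e : rel 'I_n) w v :
  chemical_tree e -> deg e w = 2 -> deg e v = 3 ->
  exists e' : rel 'I_n,
    [/\ chemical_tree e', nbranch e' = nbranch e, M1 e < M1 e' & M2 e < M2 e'].
Proof.
move=> [tree_e deg_le4] dw dv.
have wv : w != v by apply/eqP => wv; rewrite wv dv in dw.
have [y ewy conn_wv] : exists2 y, e w y & connect (del_edge e w y) w v.
  by apply: exists_edge_off_path; rewrite ?dw //; exact: tree_e.2.1.
have tree' := tree_move_edge tree_e ewy wv conn_wv.
have deg' z :
    deg (move_edge e w y v) z = if z == w then 1 else if z == v then 4 else deg e z.
  have := deg_move_edge tree_e ewy wv conn_wv z.
  case: (eqVneq z w) => [->|zw]; first by rewrite (negbTE wv) dw /=; lia.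
  by case: (eqVneq z v) => [->|zv] /=; rewrite ?dv /=; lia.
have deg'_le4 z : deg (move_edge e w y v) z <= 4.
  by rewrite deg'; case: ifP => // _; case: ifP.
exists (move_edge e w y v); split => //.
- apply: eq_card => z; rewrite !inE deg'.
  case: (eqVneq z w) => [->|_]; first by rewrite dw.
  by case: (eqVneq z v) => [->|_]; rewrite ?dv.
- by have := M1_move_edge tree_e ewy wv conn_wv; rewrite dw dv; lia.
have := M2_move_edge tree_e ewy wv conn_wv; rewrite dw dv.
have := deg_le_nbr_weight tree_e.1 v; rewrite dv.
have := nbr_weight_le (move_edge e w y v) w deg'_le4; rewrite deg' eqxx.
have [sy _] := tree_e.1; have := @deg_gt0 _ e y w; rewrite sy => /(_ ewy).
lia.
Qed.

Lemma tree_deg_gt0 n (e : rel 'I_n) z : is_tree e -> 1 < n -> 0 < deg e z.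
Proof.
move=> [_ [conn _]] n_gt1.
have /card_gt0P [z'] : 0 < #|[set~ z]| by rewrite cardsC1 card_ord; lia.
rewrite !inE => z'z.
have /connectP [[|u p] /= zp lastp] := conn z z'; first by rewrite lastp eqxx in z'z.
by case/andP: zp => /deg_gt0.
Qed.

Lemma sum_by_degree (T : finType) (D : T -> nat) (f : nat -> nat) :
  (forall z, 0 < D z <= 4) ->
  \sum_z f (D z) = f 1 * \sum_z (D z == 1 : nat) + f 2 * \sum_z (D z == 2 : nat)
                 + f 3 * \sum_z (D z == 3 : nat) + f 4 * \sum_z (D z == 4 : nat).
Proof.
move=> D14; rewrite !big_distrr -!big_split; apply: eq_bigr => z _ /=.
by have := D14 z; case: (D z) => [|[|[|[|[|k]]]]] //= _; ring.
Qed.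

Lemma ndeg_counts n b (e : rel 'I_n) : 1 < n -> in_CTstar b e ->
  [/\ n = ndeg e 1 + ndeg e 2 + ndeg e 3 + ndeg e 4,
      ndeg e 1 + 2 * ndeg e 2 + 3 * ndeg e 3 + 4 * ndeg e 4 = 2 * n.-1
    & b = ndeg e 3 + ndeg e 4].
Proof.
move=> n_gt1 [[tree_e deg_le4] <-].
have degP z : 0 < deg e z <= 4 by rewrite tree_deg_gt0 ?deg_le4.
have ndegE i : ndeg e i = \sum_z (deg e z == i : nat) by exact: card_set_sum.
rewrite !ndegE; split.
- by have := sum_by_degree (fun=> 1) degP; rewrite sum1_card card_ord; lia.
- by have := sum_by_degree id degP; rewrite (handshake tree_e.1) tree_e.2.2; lia.
- have := sum_by_degree (fun i => (2 < i : nat)) degP; rewrite /nbranch card_set_sum /=.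
  lia.
Qed.

Lemma extremal_no_deg2_deg3 n b (T : rel 'I_n) : in_CTstar b T ->
  ((forall T' : rel 'I_n, in_CTstar b T' -> M1 T' <= M1 T) \/
   (forall T' : rel 'I_n, in_CTstar b T' -> M2 T' <= M2 T)) ->
  ndeg T 2 = 0 \/ ndeg T 3 = 0.
Proof.
move=> [chem nb] Tmax.
case: (posnP (ndeg T 2)) => [->|/card_gt0P [w]]; first by left.
case: (posnP (ndeg T 3)) => [->|/card_gt0P [v]]; first by right.
rewrite !inE => /eqP dv /eqP dw.
have [T' [chem' nb' M1_lt M2_lt]] := move_edge_improves chem dw dv.
have inT' : in_CTstar b T' by split; rewrite // nb'.
by case: Tmax => /(_ T' inT'); rewrite leqNgt ?M1_lt ?M2_lt.
Qed.

Local Open Scope ring_scope.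
Unset Implicit Arguments.

Theorem lemma8 (n b : nat) (T : rel 'I_n) :
  (1 <= b)%N -> (2 * b + 2 < n)%N ->
  in_CTstar b T ->
  ((forall T' : rel 'I_n, in_CTstar b T' -> (M1 T' <= M1 T)%N) \/
   (forall T' : rel 'I_n, in_CTstar b T' -> (M2 T' <= M2 T)%N)) ->
  ((0 < ndeg T 2)%N ->
     (ndeg T 1)%:Z = 2 * b%:Z + 2 /\ (ndeg T 2)%:Z = n%:Z - 3 * b%:Z - 2 /\
     (ndeg T 3)%:Z = 0 /\ (ndeg T 4)%:Z = b%:Z) /\
  (ndeg T 2 = 0%N <->
     (ndeg T 1)%:Z = n%:Z - b%:Z /\ (ndeg T 3)%:Z = 3 * b%:Z - n%:Z + 2 /\
     (ndeg T 4)%:Z = n%:Z - 2 * b%:Z - 2).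
Proof.
move=> b_ge1 n_gt inT Tmax.
have n_gt1 : (1 < n)%N by lia.
have [count_n count_deg count_b] := ndeg_counts n_gt1 inT.
have := extremal_no_deg2_deg3 inT Tmax.
lia.
Qed.
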